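(* Let $\alpha>0$, $\Omega=[0,1]^3$, and let $\boldsymbol m=(m_1,m_2,m_3)$ be a solution of $$\partial_t\boldsymbol m=-\boldsymbol m\times\Delta\boldsymbol m+\alpha\Delta\boldsymbol m+\alpha|\nabla\boldsymbol m|^2\boldsymbol m\ \text{ in }\Omega\times(0,T],\qquad\partial_{\mathbf n}\boldsymbol m=0\ \text{ on }\partial\Omega,$$ which is smooth up to the boundary (in particular $C^3$ in space up to $\partial\Omega$ with $\partial_z\partial_t\boldsymbol m$ continuous up to the boundary) and satisfies $|\boldsymbol m|=1$. Then $\partial_z^3\boldsymbol m=0$ on the boundary face $\{z=0\}$ (and analogously $\partial_x^3\boldsymbol m=0$ on $\{x=0\},\{x=1\}$, etc.). Consequently, for $h>0$ small and any fixed $x,y$, $\boldsymbol m(x,y,-\tfrac h2,t)=\boldsymbol m(x,y,\tfrac h2,t)+\mathcal O(h^5)$, where $\boldsymbol m$ is smoothly extended beyond the boundary.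
   Context: $|\nabla\boldsymbol m|^2=\sum_{i=1}^3|\nabla m_i|^2$; $\mathbf n$ is the outward unit normal. *)

From Stdlib Require Import Reals.
From Coquelicot Require Import Coquelicot.
Open Scope R_scope.

(* A scalar field of (x, y, z, t). A vector field m = (m1, m2, m3) is given
   by its three components. *)
Definition field := R -> R -> R -> R -> R.

Definition dx (f : field) : field := fun x y z t => Derive (fun u => f u y z t) x.
Definition dy (f : field) : field := fun x y z t => Derive (fun u => f x u z t) y.
Definition dz (f : field) : field := fun x y z t => Derive (fun u => f x y u t) z.
Definition dt (f : field) : field := fun x y z t => Derive (fun u => f x y z u) t.

Definition lap (f : field) : field :=
  fun x y z t => dx (dx f) x y z t + dy (dy f) x y z t + dz (dz f) x y z t.

Definition gradsq (f : field) : field :=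
  fun x y z t => (dx f x y z t)^2 + (dy f x y z t)^2 + (dz f x y z t)^2.

Definition gradsq3 (m1 m2 m3 : field) : field :=
  fun x y z t => gradsq m1 x y z t + gradsq m2 x y z t + gradsq m3 x y z t.

Definition in01 (s : R) : Prop := 0 <= s <= 1.

Definition llg_dom (T : R) (x y z t : R) : Prop :=
  in01 x /\ in01 y /\ in01 z /\ 0 < t <= T.

Definition open4 (U : R -> R -> R -> R -> Prop) : Prop :=
  forall x y z t, U x y z t -> exists delta, 0 < delta /\
    forall x' y' z' t', Rabs (x' - x) < delta -> Rabs (y' - y) < delta ->
      Rabs (z' - z) < delta -> Rabs (t' - t) < delta -> U x' y' z' t'.

Definition cont_on (U : R -> R -> R -> R -> Prop) (f : field) : Prop :=
  forall x y z t, U x y z t -> forall eps, 0 < eps -> exists delta, 0 < delta /\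
    forall x' y' z' t', Rabs (x' - x) < delta -> Rabs (y' - y) < delta ->
      Rabs (z' - z) < delta -> Rabs (t' - t) < delta ->
      Rabs (f x' y' z' t' - f x y z t) < eps.

Fixpoint Ck (k : nat) (U : R -> R -> R -> R -> Prop) (f : field) : Prop :=
  match k with
  | O => cont_on U f
  | S k' =>
      cont_on U f /\
      (forall x y z t, U x y z t ->
         ex_derive (fun u => f u y z t) x /\ ex_derive (fun u => f x u z t) y /\
         ex_derive (fun u => f x y u t) z /\ ex_derive (fun u => f x y z u) t) /\
      Ck k' U (dx f) /\ Ck k' U (dy f) /\ Ck k' U (dz f) /\ Ck k' U (dt f)
  end.

Definition smooth_on (U : R -> R -> R -> R -> Prop) (f : field) : Prop :=
  forall k, Ck k U f.

Definition LLG (alpha T : R) (m1 m2 m3 : field) : Prop :=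
  forall x y z t, llg_dom T x y z t ->
    let G := gradsq3 m1 m2 m3 x y z t in
    let a1 := m1 x y z t in let a2 := m2 x y z t in let a3 := m3 x y z t in
    let b1 := lap m1 x y z t in let b2 := lap m2 x y z t in
    let b3 := lap m3 x y z t in
    dt m1 x y z t = - (a2 * b3 - a3 * b2) + alpha * b1 + alpha * G * a1 /\
    dt m2 x y z t = - (a3 * b1 - a1 * b3) + alpha * b2 + alpha * G * a2 /\
    dt m3 x y z t = - (a1 * b2 - a2 * b1) + alpha * b3 + alpha * G * a3.

Definition neumann_bc (T : R) (f : field) : Prop :=
  (forall y z t, in01 y -> in01 z -> 0 < t <= T ->
     dx f 0 y z t = 0 /\ dx f 1 y z t = 0) /\
  (forall x z t, in01 x -> in01 z -> 0 < t <= T ->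
     dy f x 0 z t = 0 /\ dy f x 1 z t = 0) /\
  (forall x y t, in01 x -> in01 y -> 0 < t <= T ->
     dz f x y 0 t = 0 /\ dz f x y 1 t = 0).

Definition third_normal_zero (T : R) (f : field) : Prop :=
  (forall y z t, in01 y -> in01 z -> 0 < t <= T ->
     dx (dx (dx f)) 0 y z t = 0 /\ dx (dx (dx f)) 1 y z t = 0) /\
  (forall x z t, in01 x -> in01 z -> 0 < t <= T ->
     dy (dy (dy f)) x 0 z t = 0 /\ dy (dy (dy f)) x 1 z t = 0) /\
  (forall x y t, in01 x -> in01 y -> 0 < t <= T ->
     dz (dz (dz f)) x y 0 t = 0 /\ dz (dz (dz f)) x y 1 t = 0).

(* On the face z = 0 the Neumann condition dz m = 0 holds identically in x, y and t, so all
   tangential derivatives of dz m vanish there as well.  Differentiating the equation in z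
   at the face, every term except those containing dz (Lap m) = dz^3 m drops out, leaving
   alpha v = m x v for v = dz^3 m.  Dotting with v gives alpha |v|^2 = 0, hence v = 0.  The other faces follow by exchanging coordinates.
   Finally g(s) = m(x, y, s, t) has g'(0) = g'''(0) = 0, so g(-s) - g(s) is flat to order
   four at 0 and Taylor's formula gives the O(h^5) bound. *)
From Stdlib Require Import Reals Lra Lia.
From Coquelicot Require Import Coquelicot.
Open Scope R_scope.

Definition limit_point (S : R -> Prop) (a : R) : Prop :=
  forall d, 0 < d -> exists h, h <> 0 /\ Rabs h < d /\ S (a + h).

Lemma is_derive_vanishing_on (f : R -> R) (S : R -> Prop) (a l : R) :
  is_derive f a l -> (forall s, S s -> f s = 0) -> S a -> limit_point S a -> l = 0.
Proof.
  intros Hd Hzero Ha Hlim. apply is_derive_Reals in Hd.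
  destruct (Req_dec l 0) as [E | E]; [exact E | exfalso].
  destruct (Hd (Rabs l) (Rabs_pos_lt _ E)) as [d Hdl].
  destruct (Hlim d (cond_pos d)) as [h [Hh0 [Hhd Hsh]]].
  specialize (Hdl h Hh0 Hhd). rewrite (Hzero _ Hsh), (Hzero _ Ha) in Hdl.
  replace ((0 - 0) / h - l) with (- l) in Hdl by (field; exact Hh0).
  rewrite Rabs_Ropp in Hdl. lra.
Qed.

Lemma Derive_vanishing_on (f : R -> R) (S : R -> Prop) (a : R) :
  ex_derive f a -> (forall s, S s -> f s = 0) -> S a -> limit_point S a -> Derive f a = 0.
Proof. intros Hd. apply (is_derive_vanishing_on f S a), Derive_correct, Hd. Qed.

Lemma limit_point_in01 (a : R) : in01 a -> limit_point in01 a.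
Proof.
  unfold in01; intros Ha d Hd.
  assert (Hpos : 0 < Rmin (d / 2) (1 / 2)) by (apply Rmin_pos; lra).
  pose proof (Rmin_l (d / 2) (1 / 2)). pose proof (Rmin_r (d / 2) (1 / 2)).
  destruct (Rle_lt_dec a (1 / 2)).
  - exists (Rmin (d / 2) (1 / 2)). rewrite Rabs_pos_eq by lra. repeat split; lra.
  - exists (- Rmin (d / 2) (1 / 2)). rewrite Rabs_Ropp, Rabs_pos_eq by lra.
    repeat split; lra.
Qed.

Lemma limit_point_time (T a : R) : 0 < a <= T -> limit_point (fun c => 0 < c <= T) a.
Proof.
  intros Ha d Hd.
  assert (Hpos : 0 < Rmin (d / 2) (a / 2)) by (apply Rmin_pos; lra).
  pose proof (Rmin_l (d / 2) (a / 2)). pose proof (Rmin_r (d / 2) (a / 2)).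
  exists (- Rmin (d / 2) (a / 2)). rewrite Rabs_Ropp, Rabs_pos_eq by lra. repeat split; lra.
Qed.

Lemma is_derive_plus3 (f g h : R -> R) (x df dg dh l : R) :
  is_derive f x df -> is_derive g x dg -> is_derive h x dh -> df + dg + dh = l ->
  is_derive (fun u => f u + g u + h u) x l.
Proof.
  intros Hf Hg Hh <-.
  apply (is_derive_plus (fun u => f u + g u) h); [apply (is_derive_plus f g) |]; assumption.
Qed.

Lemma is_derive_sqr_zero (f : R -> R) (x df : R) :
  is_derive f x df -> f x * df = 0 -> is_derive (fun u => f u ^ 2) x 0.
Proof.
  intros Hf E.
  apply (is_derive_ext (fun u => f u * f u)); [intros u; simpl; ring |].
  replace 0 with (df * f x + f x * df) by lra.
  apply (is_derive_mult f f); [exact Hf | exact Hf | intros; apply Rmult_comm].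
Qed.

Lemma is_derive_llg_residual (alpha : R) (D Ai Aj Ak Bi Bj Bk G : R -> R) (z vi vj vk : R) :
  is_derive D z 0 -> is_derive Ai z 0 -> is_derive Aj z 0 -> is_derive Ak z 0 ->
  is_derive Bi z vi -> is_derive Bj z vj -> is_derive Bk z vk -> is_derive G z 0 ->
  is_derive
    (fun u => D u - (- (Aj u * Bk u - Ak u * Bj u) + alpha * Bi u + alpha * G u * Ai u)) z
    (Aj z * vk - Ak z * vj - alpha * vi).
Proof.
  intros HD HAi HAj HAk HBi HBj HBk HG.
  auto_derive; [repeat split; eexists; eassumption |].
  repeat match goal with
  | |- context [Derive (fun x => ?f x) z] =>
      match goal with H : is_derive f z ?l |- _ =>
        replace (Derive (fun x => f x) z) with l
          by (symmetry; exact (is_derive_unique _ _ _ H))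
      end
  end.
  ring.
Qed.

(* Dot the three equations with v and use v . (a x v) = 0. *)
Lemma cross_fixed_zero (alpha a1 a2 a3 v1 v2 v3 : R) : 0 < alpha ->
  alpha * v1 = a2 * v3 - a3 * v2 -> alpha * v2 = a3 * v1 - a1 * v3 ->
  alpha * v3 = a1 * v2 - a2 * v1 -> v1 = 0 /\ v2 = 0 /\ v3 = 0.
Proof.
  intros Ha E1 E2 E3.
  assert (Hsq : alpha * (v1 * v1 + v2 * v2 + v3 * v3) = 0).
  { transitivity (v1 * (alpha * v1) + v2 * (alpha * v2) + v3 * (alpha * v3)); [ring |].
    rewrite E1, E2, E3. ring. }
  assert (Hsum : v1 * v1 + v2 * v2 + v3 * v3 = 0)
    by (apply (Rmult_eq_reg_l alpha); lra).
  pose proof (Rle_0_sqr v1). pose proof (Rle_0_sqr v2). pose proof (Rle_0_sqr v3).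
  unfold Rsqr in *. repeat split; apply Rsqr_0_uniq; unfold Rsqr; lra.
Qed.

Definition smooth_between (a b : R) (g : R -> R) : Prop :=
  forall s k, a < s < b -> ex_derive_n g k s.

Lemma smooth_between_locally (a b s : R) (g : R -> R) (n : nat) :
  smooth_between a b g -> a < s < b ->
  locally s (fun y => forall k, (k <= n)%nat -> ex_derive_n g k y).
Proof.
  intros Hg Hs.
  apply (locally_open (fun y => a < y < b)); [| intros y Hy k _; apply Hg, Hy | exact Hs].
  apply open_and; [apply open_gt | apply open_lt].
Qed.

Lemma smooth_between_opp (d : R) (g : R -> R) :
  smooth_between (- d) d g -> smooth_between (- d) d (fun u => g (- u)).
Proof.
  intros Hg s k Hs. apply ex_derive_n_comp_opp.
  apply (smooth_between_locally (- d) d); [exact Hg | lra].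
Qed.

Lemma smooth_between_minus (a b : R) (f g : R -> R) :
  smooth_between a b f -> smooth_between a b g -> smooth_between a b (fun u => f u - g u).
Proof.
  intros Hf Hg s k Hs.
  apply ex_derive_n_minus; apply (smooth_between_locally a b); assumption.
Qed.

Lemma Derive_n_odd_part_0 (d : R) (g : R -> R) (k : nat) : 0 < d ->
  smooth_between (- d) d g ->
  Derive_n (fun u => g (- u) - g u) k 0 = ((-1) ^ k - 1) * Derive_n g k 0.
Proof.
  intros Hd Hg.
  rewrite Derive_n_minus, Derive_n_comp_opp, Ropp_0; [ring | | |];
    apply (smooth_between_locally (- d) d); auto using smooth_between_opp; lra.
Qed.

Lemma Taylor_flat_bound (h : R -> R) (d : R) (n : nat) : 0 < d ->
  smooth_between (- d) d h -> (forall k, (k <= n)%nat -> Derive_n h k 0 = 0) ->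
  exists C, forall s, 0 < s < d / 2 -> Rabs (h s) <= C * s ^ S n.
Proof.
  intros Hd Hh Hflat.
  set (hn := Derive_n h (S n)).
  assert (Hcont : forall c, 0 <= c <= d / 2 -> continuity_pt (fun c => Rabs (hn c)) c).
  { intros c Hc. apply (continuity_pt_comp hn Rabs); [| apply Rcontinuity_abs].
    apply continuity_pt_filterlim.
    exact (ex_derive_continuous hn c (Hh c (S (S n)) ltac:(lra))). }
  destruct (continuity_ab_maj _ 0 (d / 2) ltac:(lra) Hcont) as [cM [HM _]].
  exists (Rabs (hn cM) / INR (Factorial.fact (S n))). intros s Hs.
  destruct (Taylor_Lagrange h n 0 s) as [z [Hz Htaylor]]; [lra | intros; apply Hh; lra |].
  rewrite Htaylor, sum_eq_R0 by (intros k Hk; rewrite Hflat by exact Hk; ring).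
  rewrite Rplus_0_l, Rminus_0_r, Rabs_mult, Rabs_pos_eq.
  - replace (Rabs (hn cM) / INR (Factorial.fact (S n)) * s ^ S n)
      with (s ^ S n / INR (Factorial.fact (S n)) * Rabs (hn cM))
      by (field; apply INR_fact_neq_0).
    apply Rmult_le_compat_l; [| apply HM; lra].
    apply Rdiv_le_0_compat; [apply pow_le; lra | apply INR_fact_lt_0].
  - apply Rdiv_le_0_compat; [apply pow_le; lra | apply INR_fact_lt_0].
Qed.

Definition bigO_h5 (f : R -> R) : Prop :=
  exists C h0, 0 < h0 /\ forall h, 0 < h < h0 -> Rabs (f h) <= C * h ^ 5.

Lemma symmetric_difference_bigO_h5 (d : R) (g : R -> R) : 0 < d ->
  smooth_between (- d) d g -> Derive_n g 1 0 = 0 -> Derive_n g 3 0 = 0 ->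
  bigO_h5 (fun h => g (- (h / 2)) - g (h / 2)).
Proof.
  intros Hd Hg D1 D3.
  assert (Hflat : forall k, (k <= 4)%nat -> Derive_n (fun u => g (- u) - g u) k 0 = 0).
  { intros k Hk. rewrite (Derive_n_odd_part_0 d) by assumption.
    destruct k as [| [| [| [| [| k]]]]];
      [ring | rewrite D1; ring | ring | rewrite D3; ring | ring | lia]. }
  destruct (Taylor_flat_bound _ d 4 Hd (smooth_between_minus _ _ _ _
    (smooth_between_opp d g Hg) Hg) Hflat) as [C HC].
  exists (C / 32), d. split; [exact Hd |]. intros h Hh.
  replace (C / 32 * h ^ 5) with (C * (h / 2) ^ 5) by field.
  apply HC. lra.
Qed.

Lemma bigO_h5_and3 (f1 f2 f3 : R -> R) : bigO_h5 f1 -> bigO_h5 f2 -> bigO_h5 f3 ->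
  exists C h0, 0 < h0 /\ forall h, 0 < h < h0 ->
    Rabs (f1 h) <= C * h ^ 5 /\ Rabs (f2 h) <= C * h ^ 5 /\ Rabs (f3 h) <= C * h ^ 5.
Proof.
  intros [C1 [h1 [Hh1 K1]]] [C2 [h2 [Hh2 K2]]] [C3 [h3 [Hh3 K3]]].
  set (C := Rmax C1 (Rmax C2 C3)).
  exists C, (Rmin h1 (Rmin h2 h3)). split; [repeat apply Rmin_pos; assumption |].
  intros h Hh.
  pose proof (Rmin_l h1 (Rmin h2 h3)). pose proof (Rmin_r h1 (Rmin h2 h3)).
  pose proof (Rmin_l h2 h3). pose proof (Rmin_r h2 h3).
  assert (Hmono : forall c, c <= C -> c * h ^ 5 <= C * h ^ 5).
  { intros c Hc. apply Rmult_le_compat_r; [apply pow_le; lra | exact Hc]. }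
  assert (C1 <= C /\ C2 <= C /\ C3 <= C) as (HC1 & HC2 & HC3).
  { unfold C. pose proof (Rmax_l C1 (Rmax C2 C3)). pose proof (Rmax_r C1 (Rmax C2 C3)).
    pose proof (Rmax_l C2 C3). pose proof (Rmax_r C2 C3). lra. }
  repeat split; eapply Rle_trans;
    [apply K1; lra | apply Hmono, HC1 | apply K2; lra | apply Hmono, HC2
    | apply K3; lra | apply Hmono, HC3].
Qed.

Lemma smooth_on_dx U f : smooth_on U f -> smooth_on U (dx f).
Proof. intros H k. exact (proj1 (proj2 (proj2 (H (S k))))). Qed.

Lemma smooth_on_dy U f : smooth_on U f -> smooth_on U (dy f).
Proof. intros H k. exact (proj1 (proj2 (proj2 (proj2 (H (S k)))))). Qed.

Lemma smooth_on_dz U f : smooth_on U f -> smooth_on U (dz f).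
Proof. intros H k. exact (proj1 (proj2 (proj2 (proj2 (proj2 (H (S k))))))). Qed.

Lemma smooth_on_dt U f : smooth_on U f -> smooth_on U (dt f).
Proof. intros H k. exact (proj2 (proj2 (proj2 (proj2 (proj2 (H (S k))))))). Qed.

Lemma smooth_on_ex_derive U f x y z t : smooth_on U f -> U x y z t ->
  ex_derive (fun u => f u y z t) x /\ ex_derive (fun u => f x u z t) y /\
  ex_derive (fun u => f x y u t) z /\ ex_derive (fun u => f x y z u) t.
Proof. intros H Hp. exact (proj1 (proj2 (H 1%nat)) _ _ _ _ Hp). Qed.

Lemma is_derive_dz U f x y z t l : smooth_on U f -> U x y z t -> dz f x y z t = l ->
  is_derive (fun u => f x y u t) z l.
Proof.
  intros Hf Hp <-. apply (Derive_correct (fun u => f x y u t)).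
  exact (proj1 (proj2 (proj2 (smooth_on_ex_derive U f x y z t Hf Hp)))).
Qed.

Lemma cont_on_continuity_2d_xz U f x y z t : cont_on U f -> U x y z t ->
  continuity_2d_pt (fun u v => f u y v t) x z.
Proof.
  intros Hf Hp eps. destruct (Hf _ _ _ _ Hp eps (cond_pos eps)) as [d [Hd Hnear]].
  exists (mkposreal d Hd). intros u v Hu Hv. apply Hnear; rewrite ?Rminus_eq_0, ?Rabs_R0; auto.
Qed.

Lemma cont_on_continuity_2d_yz U f x y z t : cont_on U f -> U x y z t ->
  continuity_2d_pt (fun u v => f x u v t) y z.
Proof.
  intros Hf Hp eps. destruct (Hf _ _ _ _ Hp eps (cond_pos eps)) as [d [Hd Hnear]].
  exists (mkposreal d Hd). intros u v Hu Hv. apply Hnear; rewrite ?Rminus_eq_0, ?Rabs_R0; auto.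
Qed.

Lemma cont_on_continuity_2d_tz U f x y z t : cont_on U f -> U x y z t ->
  continuity_2d_pt (fun u v => f x y v u) t z.
Proof.
  intros Hf Hp eps. destruct (Hf _ _ _ _ Hp eps (cond_pos eps)) as [d [Hd Hnear]].
  exists (mkposreal d Hd). intros u v Hu Hv. apply Hnear; rewrite ?Rminus_eq_0, ?Rabs_R0; auto.
Qed.

Section MixedPartials.

Variable U : R -> R -> R -> R -> Prop.
Hypothesis HUopen : open4 U.
Variable g : field.
Hypothesis Hg : smooth_on U g.

Lemma dx_dz_comm x y z t : U x y z t -> dx (dz g) x y z t = dz (dx g) x y z t.
Proof.
  intros Hp. apply (Schwarz (fun u v => g u y v t)).
  - destruct (HUopen _ _ _ _ Hp) as [d [Hd Hnear]]. exists (mkposreal d Hd). intros u v Hu Hv.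
    assert (Hq : U u y v t) by (apply Hnear; rewrite ?Rminus_eq_0, ?Rabs_R0; auto).
    destruct (smooth_on_ex_derive _ _ _ _ _ _ Hg Hq) as (Ex & _ & Ez & _).
    destruct (smooth_on_ex_derive _ _ _ _ _ _ (smooth_on_dz _ _ Hg) Hq) as (Ezx & _).
    destruct (smooth_on_ex_derive _ _ _ _ _ _ (smooth_on_dx _ _ Hg) Hq) as (_ & _ & Exz & _).
    auto.
  - exact (cont_on_continuity_2d_xz U (dx (dz g)) x y z t
      (smooth_on_dx _ _ (smooth_on_dz _ _ Hg) 0%nat) Hp).
  - exact (cont_on_continuity_2d_xz U (dz (dx g)) x y z t
      (smooth_on_dz _ _ (smooth_on_dx _ _ Hg) 0%nat) Hp).
Qed.

Lemma dy_dz_comm x y z t : U x y z t -> dy (dz g) x y z t = dz (dy g) x y z t.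
Proof.
  intros Hp. apply (Schwarz (fun u v => g x u v t)).
  - destruct (HUopen _ _ _ _ Hp) as [d [Hd Hnear]]. exists (mkposreal d Hd). intros u v Hu Hv.
    assert (Hq : U x u v t) by (apply Hnear; rewrite ?Rminus_eq_0, ?Rabs_R0; auto).
    destruct (smooth_on_ex_derive _ _ _ _ _ _ Hg Hq) as (_ & Ey & Ez & _).
    destruct (smooth_on_ex_derive _ _ _ _ _ _ (smooth_on_dz _ _ Hg) Hq) as (_ & Ezy & _).
    destruct (smooth_on_ex_derive _ _ _ _ _ _ (smooth_on_dy _ _ Hg) Hq) as (_ & _ & Eyz & _).
    auto.
  - exact (cont_on_continuity_2d_yz U (dy (dz g)) x y z t
      (smooth_on_dy _ _ (smooth_on_dz _ _ Hg) 0%nat) Hp).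
  - exact (cont_on_continuity_2d_yz U (dz (dy g)) x y z t
      (smooth_on_dz _ _ (smooth_on_dy _ _ Hg) 0%nat) Hp).
Qed.

Lemma dt_dz_comm x y z t : U x y z t -> dt (dz g) x y z t = dz (dt g) x y z t.
Proof.
  intros Hp. apply (Schwarz (fun u v => g x y v u)).
  - destruct (HUopen _ _ _ _ Hp) as [d [Hd Hnear]]. exists (mkposreal d Hd). intros u v Hu Hv.
    assert (Hq : U x y v u) by (apply Hnear; rewrite ?Rminus_eq_0, ?Rabs_R0; auto).
    destruct (smooth_on_ex_derive _ _ _ _ _ _ Hg Hq) as (_ & _ & Ez & Et).
    destruct (smooth_on_ex_derive _ _ _ _ _ _ (smooth_on_dz _ _ Hg) Hq) as (_ & _ & _ & Ezt).
    destruct (smooth_on_ex_derive _ _ _ _ _ _ (smooth_on_dt _ _ Hg) Hq) as (_ & _ & Etz & _).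
    auto.
  - exact (cont_on_continuity_2d_tz U (dt (dz g)) x y z t
      (smooth_on_dt _ _ (smooth_on_dz _ _ Hg) 0%nat) Hp).
  - exact (cont_on_continuity_2d_tz U (dz (dt g)) x y z t
      (smooth_on_dz _ _ (smooth_on_dt _ _ Hg) 0%nat) Hp).
Qed.

End MixedPartials.

Definition vanishes_on_face (T z0 : R) (f : field) : Prop :=
  forall x y t, in01 x -> in01 y -> 0 < t <= T -> f x y z0 t = 0.

Section NeumannFace.

Variables (T z0 : R) (U : R -> R -> R -> R -> Prop).
Hypothesis HUopen : open4 U.
Hypothesis HUdom : forall x y z t, llg_dom T x y z t -> U x y z t.
Hypothesis Hz0 : in01 z0.

Lemma face_in_domain x y t : in01 x -> in01 y -> 0 < t <= T -> U x y z0 t.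
Proof. intros; apply HUdom; unfold llg_dom; tauto. Qed.

Lemma vanishes_dz_dx f : smooth_on U f ->
  vanishes_on_face T z0 (dz f) -> vanishes_on_face T z0 (dz (dx f)).
Proof.
  intros Hf Hv x y t Hx Hy Ht. pose proof (face_in_domain x y t Hx Hy Ht) as Hp.
  rewrite <- (dx_dz_comm U HUopen f Hf) by exact Hp.
  apply (Derive_vanishing_on (fun u => dz f u y z0 t) in01 x);
    [| intros s Hs; apply Hv; auto | exact Hx | apply limit_point_in01, Hx].
  exact (proj1 (smooth_on_ex_derive U (dz f) x y z0 t (smooth_on_dz _ _ Hf) Hp)).
Qed.

Lemma vanishes_dz_dy f : smooth_on U f ->
  vanishes_on_face T z0 (dz f) -> vanishes_on_face T z0 (dz (dy f)).
Proof.
  intros Hf Hv x y t Hx Hy Ht. pose proof (face_in_domain x y t Hx Hy Ht) as Hp.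
  rewrite <- (dy_dz_comm U HUopen f Hf) by exact Hp.
  apply (Derive_vanishing_on (fun u => dz f x u z0 t) in01 y);
    [| intros s Hs; apply Hv; auto | exact Hy | apply limit_point_in01, Hy].
  exact (proj1 (proj2 (smooth_on_ex_derive U (dz f) x y z0 t (smooth_on_dz _ _ Hf) Hp))).
Qed.

Lemma vanishes_dz_dt f : smooth_on U f ->
  vanishes_on_face T z0 (dz f) -> vanishes_on_face T z0 (dz (dt f)).
Proof.
  intros Hf Hv x y t Hx Hy Ht. pose proof (face_in_domain x y t Hx Hy Ht) as Hp.
  rewrite <- (dt_dz_comm U HUopen f Hf) by exact Hp.
  apply (Derive_vanishing_on (fun u => dz f x y z0 u) (fun c => 0 < c <= T) t);
    [| intros s Hs; apply Hv; auto | exact Ht | apply limit_point_time, Ht].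
  exact (proj2 (proj2 (proj2
    (smooth_on_ex_derive U (dz f) x y z0 t (smooth_on_dz _ _ Hf) Hp)))).
Qed.

Lemma neumann_face_derivatives m x y t : smooth_on U m -> vanishes_on_face T z0 (dz m) ->
  in01 x -> in01 y -> 0 < t <= T ->
  is_derive (fun u => m x y u t) z0 0 /\ is_derive (fun u => dt m x y u t) z0 0 /\
  is_derive (fun u => gradsq m x y u t) z0 0 /\
  is_derive (fun u => lap m x y u t) z0 (dz (dz (dz m)) x y z0 t).
Proof.
  intros Hm Hv Hx Hy Ht. pose proof (face_in_domain x y t Hx Hy Ht) as Hp.
  pose proof (vanishes_dz_dx m Hm Hv) as Vx. pose proof (vanishes_dz_dy m Hm Hv) as Vy.
  pose proof (vanishes_dz_dx (dx m) (smooth_on_dx _ _ Hm) Vx) as Vxx.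
  pose proof (vanishes_dz_dy (dy m) (smooth_on_dy _ _ Hm) Vy) as Vyy.
  split; [| split; [| split]].
  - apply (is_derive_dz U); auto.
  - apply (is_derive_dz U); [apply smooth_on_dt | | apply vanishes_dz_dt]; auto.
  - apply (is_derive_plus3 _ _ _ _ 0 0 0); [| | | ring].
    + apply (is_derive_sqr_zero _ _ 0); [apply (is_derive_dz U); auto using smooth_on_dx | ring].
    + apply (is_derive_sqr_zero _ _ 0); [apply (is_derive_dz U); auto using smooth_on_dy | ring].
    + apply (is_derive_sqr_zero _ _ (dz (dz m) x y z0 t));
        [apply (is_derive_dz U); auto using smooth_on_dz | rewrite Hv by assumption; ring].
  - apply (is_derive_plus3 _ _ _ _ 0 0 (dz (dz (dz m)) x y z0 t)); [| | | ring];
      apply (is_derive_dz U); auto 6 using smooth_on_dx, smooth_on_dy, smooth_on_dz.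
Qed.

Lemma llg_third_dz_face alpha m1 m2 m3 : 0 < alpha ->
  smooth_on U m1 -> smooth_on U m2 -> smooth_on U m3 -> LLG alpha T m1 m2 m3 ->
  vanishes_on_face T z0 (dz m1) -> vanishes_on_face T z0 (dz m2) ->
  vanishes_on_face T z0 (dz m3) ->
  vanishes_on_face T z0 (dz (dz (dz m1))) /\ vanishes_on_face T z0 (dz (dz (dz m2))) /\
  vanishes_on_face T z0 (dz (dz (dz m3))).
Proof.
  intros Ha H1 H2 H3 Hllg V1 V2 V3.
  enough (Hpt : forall x y t, in01 x -> in01 y -> 0 < t <= T ->
    dz (dz (dz m1)) x y z0 t = 0 /\ dz (dz (dz m2)) x y z0 t = 0 /\
    dz (dz (dz m3)) x y z0 t = 0)
    by (repeat split; intros x y t Hx Hy Ht; destruct (Hpt x y t Hx Hy Ht) as (? & ? & ?);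
        assumption).
  intros x y t Hx Hy Ht.
  destruct (neumann_face_derivatives m1 x y t H1 V1 Hx Hy Ht) as (A1 & D1 & G1 & L1).
  destruct (neumann_face_derivatives m2 x y t H2 V2 Hx Hy Ht) as (A2 & D2 & G2 & L2).
  destruct (neumann_face_derivatives m3 x y t H3 V3 Hx Hy Ht) as (A3 & D3 & G3 & L3).
  assert (G : is_derive (fun u => gradsq3 m1 m2 m3 x y u t) z0 0)
    by (apply (is_derive_plus3 _ _ _ _ 0 0 0); auto; ring).
  assert (Hllg_line : forall s, in01 s -> _)
    by (intros s Hs; refine (Hllg x y s t _); unfold llg_dom; tauto).
  cbv zeta in Hllg_line.
  pose proof (is_derive_vanishing_on _ in01 z0 _
    (is_derive_llg_residual alpha _ _ _ _ _ _ _ _ z0 _ _ _ D1 A1 A2 A3 L1 L2 L3 G)) as E1.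
  pose proof (is_derive_vanishing_on _ in01 z0 _
    (is_derive_llg_residual alpha _ _ _ _ _ _ _ _ z0 _ _ _ D2 A2 A3 A1 L2 L3 L1 G)) as E2.
  pose proof (is_derive_vanishing_on _ in01 z0 _
    (is_derive_llg_residual alpha _ _ _ _ _ _ _ _ z0 _ _ _ D3 A3 A1 A2 L3 L1 L2 G)) as E3.
  specialize (E1 ltac:(intros s Hs; destruct (Hllg_line s Hs) as (e & _ & _); cbv beta;
    rewrite e; ring) Hz0 (limit_point_in01 _ Hz0)).
  specialize (E2 ltac:(intros s Hs; destruct (Hllg_line s Hs) as (_ & e & _); cbv beta;
    rewrite e; ring) Hz0 (limit_point_in01 _ Hz0)).
  specialize (E3 ltac:(intros s Hs; destruct (Hllg_line s Hs) as (_ & _ & e); cbv beta;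
    rewrite e; ring) Hz0 (limit_point_in01 _ Hz0)).
  cbv beta in E1, E2, E3.
  apply (cross_fixed_zero alpha (m1 x y z0 t) (m2 x y z0 t) (m3 x y z0 t)); lra.
Qed.

End NeumannFace.

Definition vanishes_on_z_faces (T : R) (f : field) : Prop :=
  vanishes_on_face T 0 f /\ vanishes_on_face T 1 f.

Lemma llg_third_dz_z_faces alpha T U m1 m2 m3 : 0 < alpha -> open4 U ->
  (forall x y z t, llg_dom T x y z t -> U x y z t) ->
  smooth_on U m1 -> smooth_on U m2 -> smooth_on U m3 -> LLG alpha T m1 m2 m3 ->
  vanishes_on_z_faces T (dz m1) -> vanishes_on_z_faces T (dz m2) ->
  vanishes_on_z_faces T (dz m3) ->
  vanishes_on_z_faces T (dz (dz (dz m1))) /\ vanishes_on_z_faces T (dz (dz (dz m2))) /\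
  vanishes_on_z_faces T (dz (dz (dz m3))).
Proof.
  intros Ha HU Hdom H1 H2 H3 Hllg [N1 N1'] [N2 N2'] [N3 N3'].
  destruct (llg_third_dz_face T 0 U HU Hdom ltac:(unfold in01; lra) alpha m1 m2 m3
    Ha H1 H2 H3 Hllg N1 N2 N3) as (Z1 & Z2 & Z3).
  destruct (llg_third_dz_face T 1 U HU Hdom ltac:(unfold in01; lra) alpha m1 m2 m3
    Ha H1 H2 H3 Hllg N1' N2' N3') as (O1 & O2 & O3).
  unfold vanishes_on_z_faces. auto.
Qed.

Definition swap_xz {A : Type} (f : R -> R -> R -> R -> A) : R -> R -> R -> R -> A :=
  fun x y z t => f z y x t.
Definition swap_yz {A : Type} (f : R -> R -> R -> R -> A) : R -> R -> R -> R -> A :=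
  fun x y z t => f x z y t.

Lemma open4_swap_xz U : open4 U -> open4 (swap_xz U).
Proof. intros H x y z t Hp. destruct (H z y x t Hp) as [d [Hd Hnear]]. exists d; split; [exact Hd |]. intros; apply Hnear; assumption. Qed.

Lemma open4_swap_yz U : open4 U -> open4 (swap_yz U).
Proof. intros H x y z t Hp. destruct (H x z y t Hp) as [d [Hd Hnear]]. exists d; split; [exact Hd |]. intros; apply Hnear; assumption. Qed.

Lemma llg_dom_sub_swap_xz T U : (forall x y z t, llg_dom T x y z t -> U x y z t) ->
  forall x y z t, llg_dom T x y z t -> swap_xz U x y z t.
Proof. intros H x y z t Hd. apply H. unfold llg_dom in *; tauto. Qed.

Lemma llg_dom_sub_swap_yz T U : (forall x y z t, llg_dom T x y z t -> U x y z t) ->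
  forall x y z t, llg_dom T x y z t -> swap_yz U x y z t.
Proof. intros H x y z t Hd. apply H. unfold llg_dom in *; tauto. Qed.

Lemma cont_on_swap_xz U f : cont_on U f -> cont_on (swap_xz U) (swap_xz f).
Proof.
  intros H x y z t Hp eps Heps. destruct (H z y x t Hp eps Heps) as [d [Hd Hnear]].
  exists d; split; [exact Hd |]. intros; apply Hnear; assumption.
Qed.

Lemma cont_on_swap_yz U f : cont_on U f -> cont_on (swap_yz U) (swap_yz f).
Proof.
  intros H x y z t Hp eps Heps. destruct (H x z y t Hp eps Heps) as [d [Hd Hnear]].
  exists d; split; [exact Hd |]. intros; apply Hnear; assumption.
Qed.

(* Derivatives commute with the swaps up to relabelling: dx (swap_xz f) is swap_xz (dz f)
   by conversion, and so on. *)
Lemma Ck_swap_xz k : forall U f, Ck k U f -> Ck k (swap_xz U) (swap_xz f).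
Proof.
  induction k as [| k IH]; intros U f H; [exact (cont_on_swap_xz U f H) |].
  destruct H as (Hc & Hex & Hx & Hy & Hz & Ht).
  split; [exact (cont_on_swap_xz U f Hc) |].
  split; [intros x y z t Hp; destruct (Hex z y x t Hp) as (? & ? & ? & ?); unfold swap_xz; tauto |].
  exact (conj (IH _ _ Hz) (conj (IH _ _ Hy) (conj (IH _ _ Hx) (IH _ _ Ht)))).
Qed.

Lemma Ck_swap_yz k : forall U f, Ck k U f -> Ck k (swap_yz U) (swap_yz f).
Proof.
  induction k as [| k IH]; intros U f H; [exact (cont_on_swap_yz U f H) |].
  destruct H as (Hc & Hex & Hx & Hy & Hz & Ht).
  split; [exact (cont_on_swap_yz U f Hc) |].
  split; [intros x y z t Hp; destruct (Hex x z y t Hp) as (? & ? & ? & ?); unfold swap_yz; tauto |].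
  exact (conj (IH _ _ Hx) (conj (IH _ _ Hz) (conj (IH _ _ Hy) (IH _ _ Ht)))).
Qed.

Lemma lap_swap_xz f x y z t : lap (swap_xz f) x y z t = lap f z y x t.
Proof. unfold lap, swap_xz, dx, dy, dz. ring. Qed.

Lemma lap_swap_yz f x y z t : lap (swap_yz f) x y z t = lap f x z y t.
Proof. unfold lap, swap_yz, dx, dy, dz. ring. Qed.

Lemma gradsq_swap_xz f x y z t : gradsq (swap_xz f) x y z t = gradsq f z y x t.
Proof. unfold gradsq, swap_xz, dx, dy, dz. ring. Qed.

Lemma gradsq_swap_yz f x y z t : gradsq (swap_yz f) x y z t = gradsq f x z y t.
Proof. unfold gradsq, swap_yz, dx, dy, dz. ring. Qed.

Lemma LLG_swap_xz alpha T m1 m2 m3 :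
  LLG alpha T m1 m2 m3 -> LLG alpha T (swap_xz m1) (swap_xz m2) (swap_xz m3).
Proof.
  intros H x y z t Hd. cbv zeta. unfold gradsq3. rewrite !lap_swap_xz, !gradsq_swap_xz.
  apply H. unfold llg_dom in *; tauto.
Qed.

Lemma LLG_swap_yz alpha T m1 m2 m3 :
  LLG alpha T m1 m2 m3 -> LLG alpha T (swap_yz m1) (swap_yz m2) (swap_yz m3).
Proof.
  intros H x y z t Hd. cbv zeta. unfold gradsq3. rewrite !lap_swap_yz, !gradsq_swap_yz.
  apply H. unfold llg_dom in *; tauto.
Qed.

Lemma neumann_bc_z_faces T f : neumann_bc T f ->
  vanishes_on_z_faces T (dz (swap_xz f)) /\ vanishes_on_z_faces T (dz (swap_yz f)) /\
  vanishes_on_z_faces T (dz f).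
Proof.
  intros (Nx & Ny & Nz).
  repeat split; intros a b c Ha Hb Hc.
  - exact (proj1 (Nx b a c Hb Ha Hc)).
  - exact (proj2 (Nx b a c Hb Ha Hc)).
  - exact (proj1 (Ny a b c Ha Hb Hc)).
  - exact (proj2 (Ny a b c Ha Hb Hc)).
  - exact (proj1 (Nz a b c Ha Hb Hc)).
  - exact (proj2 (Nz a b c Ha Hb Hc)).
Qed.

Lemma third_normal_zero_of_z_faces T f :
  vanishes_on_z_faces T (dz (dz (dz (swap_xz f)))) ->
  vanishes_on_z_faces T (dz (dz (dz (swap_yz f)))) ->
  vanishes_on_z_faces T (dz (dz (dz f))) -> third_normal_zero T f.
Proof.
  intros [X0 X1] [Y0 Y1] [Z0 Z1].
  split; [| split]; intros a b c Ha Hb Hc.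
  - exact (conj (X0 b a c Hb Ha Hc) (X1 b a c Hb Ha Hc)).
  - exact (conj (Y0 a b c Ha Hb Hc) (Y1 a b c Ha Hb Hc)).
  - exact (conj (Z0 a b c Ha Hb Hc) (Z1 a b c Ha Hb Hc)).
Qed.

Lemma llg_third_normal_zero alpha T U m1 m2 m3 : 0 < alpha -> open4 U ->
  (forall x y z t, llg_dom T x y z t -> U x y z t) ->
  smooth_on U m1 -> smooth_on U m2 -> smooth_on U m3 -> LLG alpha T m1 m2 m3 ->
  neumann_bc T m1 -> neumann_bc T m2 -> neumann_bc T m3 ->
  third_normal_zero T m1 /\ third_normal_zero T m2 /\ third_normal_zero T m3.
Proof.
  intros Ha HU Hdom H1 H2 H3 Hllg B1 B2 B3.
  destruct (neumann_bc_z_faces T m1 B1) as (X1 & Y1 & Z1).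
  destruct (neumann_bc_z_faces T m2 B2) as (X2 & Y2 & Z2).
  destruct (neumann_bc_z_faces T m3 B3) as (X3 & Y3 & Z3).
  destruct (llg_third_dz_z_faces alpha T U m1 m2 m3 Ha HU Hdom H1 H2 H3 Hllg Z1 Z2 Z3)
    as (Z1' & Z2' & Z3').
  destruct (llg_third_dz_z_faces alpha T (swap_xz U) _ _ _ Ha (open4_swap_xz U HU)
    (llg_dom_sub_swap_xz T U Hdom) (fun k => Ck_swap_xz k U m1 (H1 k))
    (fun k => Ck_swap_xz k U m2 (H2 k)) (fun k => Ck_swap_xz k U m3 (H3 k))
    (LLG_swap_xz alpha T m1 m2 m3 Hllg) X1 X2 X3) as (X1' & X2' & X3').
  destruct (llg_third_dz_z_faces alpha T (swap_yz U) _ _ _ Ha (open4_swap_yz U HU)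
    (llg_dom_sub_swap_yz T U Hdom) (fun k => Ck_swap_yz k U m1 (H1 k))
    (fun k => Ck_swap_yz k U m2 (H2 k)) (fun k => Ck_swap_yz k U m3 (H3 k))
    (LLG_swap_yz alpha T m1 m2 m3 Hllg) Y1 Y2 Y3) as (Y1' & Y2' & Y3').
  auto using third_normal_zero_of_z_faces.
Qed.

Fixpoint dz_n (k : nat) (f : field) : field :=
  match k with O => f | S k => dz (dz_n k f) end.

Lemma Derive_n_dz_n f x y t k u :
  Derive_n (fun v => f x y v t) k u = dz_n k f x y u t.
Proof.
  revert u; induction k as [| k IH]; intros u; [reflexivity |].
  apply Derive_ext. exact IH.
Qed.

Lemma smooth_on_dz_n U f k : smooth_on U f -> smooth_on U (dz_n k f).
Proof. intros Hf. induction k as [| k IH]; [exact Hf | exact (smooth_on_dz _ _ IH)]. Qed.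

Lemma smooth_on_normal_line U f x y t : open4 U -> smooth_on U f -> U x y 0 t ->
  exists d, 0 < d /\ smooth_between (- d) d (fun v => f x y v t).
Proof.
  intros HU Hf Hp. destruct (HU _ _ _ _ Hp) as [d [Hd Hnear]].
  exists d. split; [exact Hd |]. intros s [| k] Hs; [exact I |].
  apply (ex_derive_ext (fun v => dz_n k f x y v t)); [intros v; symmetry; apply Derive_n_dz_n |].
  assert (Hq : U x y s t)
    by (apply Hnear; rewrite ?Rminus_eq_0, ?Rminus_0_r, ?Rabs_R0; try apply Rabs_def1; lra).
  exact (proj1 (proj2 (proj2 (smooth_on_ex_derive U _ x y s t (smooth_on_dz_n U f k Hf) Hq)))).
Qed.

Lemma neumann_symmetric_difference_bigO_h5 U f x y t : open4 U -> smooth_on U f ->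
  U x y 0 t -> dz f x y 0 t = 0 -> dz (dz (dz f)) x y 0 t = 0 ->
  bigO_h5 (fun h => f x y (- (h / 2)) t - f x y (h / 2) t).
Proof.
  intros HU Hf Hp D1 D3. destruct (smooth_on_normal_line U f x y t HU Hf Hp) as [d [Hd Hs]].
  apply (symmetric_difference_bigO_h5 d _ Hd Hs); rewrite Derive_n_dz_n; assumption.
Qed.

Theorem mainTheorem5
  (alpha T : R) (U : R -> R -> R -> R -> Prop) (m1 m2 m3 : field)
  (Halpha : 0 < alpha) (HT : 0 < T)
  (HUopen : open4 U)
  (HUdom : forall x y z t, llg_dom T x y z t -> U x y z t)
  (Hs1 : smooth_on U m1) (Hs2 : smooth_on U m2) (Hs3 : smooth_on U m3)
  (Hllg : LLG alpha T m1 m2 m3)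
  (Hbc1 : neumann_bc T m1) (Hbc2 : neumann_bc T m2) (Hbc3 : neumann_bc T m3)
  (Hunit : forall x y z t, llg_dom T x y z t ->
     (m1 x y z t)^2 + (m2 x y z t)^2 + (m3 x y z t)^2 = 1) :
  (third_normal_zero T m1 /\ third_normal_zero T m2 /\ third_normal_zero T m3) /\
  (forall x y t, in01 x -> in01 y -> 0 < t <= T ->
     exists C h0, 0 < h0 /\ forall h, 0 < h < h0 ->
       Rabs (m1 x y (- (h / 2)) t - m1 x y (h / 2) t) <= C * h ^ 5 /\
       Rabs (m2 x y (- (h / 2)) t - m2 x y (h / 2) t) <= C * h ^ 5 /\
       Rabs (m3 x y (- (h / 2)) t - m3 x y (h / 2) t) <= C * h ^ 5).
Proof.
  pose proof (llg_third_normal_zero alpha T U m1 m2 m3 Halpha HUopen HUdom Hs1 Hs2 Hs3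
    Hllg Hbc1 Hbc2 Hbc3) as Hthird.
  split; [exact Hthird |].
  intros x y t Hx Hy Ht.
  assert (Hp : U x y 0 t) by (apply HUdom; unfold llg_dom, in01 in *; repeat split; lra).
  destruct Hthird as ((_ & _ & Z1) & (_ & _ & Z2) & (_ & _ & Z3)).
  destruct Hbc1 as (_ & _ & N1), Hbc2 as (_ & _ & N2), Hbc3 as (_ & _ & N3).
  apply bigO_h5_and3; apply (neumann_symmetric_difference_bigO_h5 U); try assumption.
  - exact (proj1 (N1 x y t Hx Hy Ht)).
  - exact (proj1 (Z1 x y t Hx Hy Ht)).
  - exact (proj1 (N2 x y t Hx Hy Ht)).
  - exact (proj1 (Z2 x y t Hx Hy Ht)).
  - exact (proj1 (N3 x y t Hx Hy Ht)).
  - exact (proj1 (Z3 x y t Hx Hy Ht)).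
Qed.
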